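(* Let $p,q,l,N\in\mathbb{Z}_{\geq 0}$, $s=p+q$, and let $M=(M_1,\dots,M_s)\in\mathrm{Sym}_N^{p}\times\mathrm{Alt}_N^{q}$. Suppose there is a subspace $V\subseteq\mathbb{C}^N$ of dimension $2^sl$ such that $M_1V+\dots+M_sV$ has dimension $s2^sl$. Then the Zariski closure of the orbit $\{(gM_1g^T,\dots,gM_sg^T):g\in\mathrm{GL}_N(\mathbb{C})\}$ contains a tuple $(M'_1,\dots,M'_s)\in\mathrm{Sym}_N^{p}\times\mathrm{Alt}_N^{q}$ such that for each $i$: (a) all entries $(M'_i)_{j,k}$ with $j,k>l$ are zero, and (b) the $N\times l$ matrix formed by the first $l$ columns of $M'_i$ has, in blocks of $l$ rows followed by a final block of $N-(s+1)l$ rows, first block $0_{l\times l}$, $(i+1)$-st block $\mathrm{Id}_l$, and all other blocks zero.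
   Context: $\mathrm{Sym}_N$ and $\mathrm{Alt}_N$ denote the spaces of symmetric, respectively skew-symmetric, complex $N\times N$ matrices; the first $p$ entries of a tuple are symmetric and the last $q$ are skew-symmetric. (Entries of $M'_i$ in the first $l$ rows are then determined by (b) and (skew-)symmetry.) *)

From HB Require Import structures.
From mathcomp Require Import all_boot all_order all_algebra.
Set Implicit Arguments. Unset Strict Implicit. Unset Printing Implicit Defensive.
Import Order.TTheory GRing.Theory Num.Theory.
Local Open Scope ring_scope.

Inductive pexpr (V : Type) (R : Type) : Type :=
  | PVar of V
  | PConst of R
  | PAdd of pexpr V R & pexpr V R
  | PMul of pexpr V R & pexpr V R.

Fixpoint peval (V : Type) (R : nzRingType) (x : V -> R) (P : pexpr V R) : R :=
  match P with
  | PVar v => x v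
  | PConst c => c
  | PAdd P1 P2 => peval x P1 + peval x P2
  | PMul P1 P2 => peval x P1 * peval x P2
  end.

Definition zariski_closure (V : Type) (R : nzRingType) (S : (V -> R) -> Prop)
  : (V -> R) -> Prop :=
  fun x => forall P : pexpr V R, (forall y, S y -> peval y P = 0) -> peval x P = 0.

Definition mxtuple_coords (R : nzRingType) (s N : nat) (M : 'I_s -> 'M[R]_N)
  : ('I_s * 'I_N * 'I_N) -> R :=
  fun ijk => M ijk.1.1 ijk.1.2 ijk.2.

Definition congr_orbit (R : comUnitRingType) (s N : nat) (M : 'I_s -> 'M[R]_N)
  : (('I_s * 'I_N * 'I_N) -> R) -> Prop :=
  fun y => exists g : 'M[R]_N, g \in unitmx /\
      y = mxtuple_coords (fun i => g *m M i *m g^T).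

Definition sym_alt_tuple (R : nzRingType) (p q N : nat) (M : 'I_(p + q) -> 'M[R]_N)
  : Prop :=
  forall i : 'I_(p + q),
    if (i < p)%N then (M i)^T = M i else (M i)^T = - M i.

(* Pick an [l]-dimensional subspace [W] of [V] that is totally isotropic for every
   [M_i]: each (skew-)symmetric form halves the dimension, so [2^s l] is enough.  The
   rank hypothesis makes [V M_1^T + ... + V M_s^T] direct with every [M_i^T] injective
   on [V], so the [s l] columns of [M_i W^T] are independent and annihilated by [W].
   A basis adapted to [W], to these columns and to a complement puts every
   [g M_i g^T] in the stated shape except in the lower right [(N - l) x (N - l)]
   block; congruence by [diag(c^-1 Id_l, c Id_(N-l))] multiplies that block by [c^2]
   and leaves the rest unchanged, so the orbit contains a punctured line through the
   truncated tuple, which therefore lies in its Zariski closure. *)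

From HB Require Import structures.
From mathcomp Require Import all_boot all_order all_algebra.
From mathcomp Require Import zify ring.
From Stdlib Require Import FunctionalExtensionality.
Import Order.TTheory GRing.Theory Num.Theory.
Local Open Scope ring_scope.

Set Implicit Arguments.
Unset Strict Implicit.
Unset Printing Implicit Defensive.

Section ZariskiClosureOfLines.
Variable R : numDomainType.

Fixpoint pexpr_on_line (V : Type) (a z : V -> R) (P : pexpr V R) : {poly R} :=
  match P with
  | PVar v => (a v)%:P + (z v)%:P * 'X
  | PConst c => c%:P
  | PAdd P1 P2 => pexpr_on_line a z P1 + pexpr_on_line a z P2
  | PMul P1 P2 => pexpr_on_line a z P1 * pexpr_on_line a z P2
  end.

Lemma horner_pexpr_on_line V (a z : V -> R) P t :
  (pexpr_on_line a z P).[t] = peval (fun v => a v + t * z v) P.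
Proof.
elim: P => [v|c|P1 IH1 P2 IH2|P1 IH1 P2 IH2] /=.
- by rewrite hornerD hornerM hornerX !hornerC mulrC.
- by rewrite hornerC.
- by rewrite hornerD IH1 IH2.
- by rewrite hornerM IH1 IH2.
Qed.

(* A polynomial vanishing on the punctured line vanishes at [t = 1, 2, 3, ...],
   hence identically, in particular at [t = 0]. *)
Lemma zariski_closure_line V (S : (V -> R) -> Prop) (a z : V -> R) :
  (forall t, t != 0 -> S (fun v => a v + t * z v)) -> zariski_closure S a.
Proof.
move=> Sline P PS; set Q := pexpr_on_line a z P.
have Q0 : Q = 0.
  apply: (@roots_geq_poly_eq0 _ _ (mkseq (fun n => n.+1%:R) (size Q))).
  - apply/allP => _ /mapP [n _ ->].
    by rewrite /root horner_pexpr_on_line PS //; apply: Sline; rewrite pnatr_eq0.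
  - by apply: mkseq_uniq => m n /eqP; rewrite eqr_nat eqSS => /eqP.
  - by rewrite size_mkseq.
have := horner_pexpr_on_line a z P 0; rewrite -/Q Q0 horner0 => ->.
by congr peval; apply: functional_extensionality => v; rewrite mul0r addr0.
Qed.

End ZariskiClosureOfLines.

Section ShiftMatrices.
Variable R : nzRingType.

Definition shift_mx n a m : 'M[R]_(n, m) := \matrix_(j, k) ((j : nat) == a + k)%N%:R.

Lemma mul_shift_mxE m n a p (A : 'M[R]_(m, n)) i (k : 'I_p) (t : 'I_n) :
  t = (a + k)%N :> nat -> (A *m shift_mx n a p) i k = A i t.
Proof.
move=> tE; rewrite mxE (bigD1 t) //= mxE -tE eqxx mulr1 big1 ?addr0 // => u ut.
by rewrite mxE -tE (val_eqE u t) (negbTE ut) mulr0.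
Qed.

Lemma shift_mx_mul n a m b p : (b + p <= m)%N ->
  shift_mx n a m *m shift_mx m b p = shift_mx n (a + b) p.
Proof.
move=> bpm; apply/matrixP => j k.
have bk : (b + k < m)%N by move: (ltn_ord k); lia.
by rewrite (mul_shift_mxE _ _ (t := Ordinal bk)) // !mxE addnA.
Qed.

Lemma tr_shift_mx_mul n a m b p : (b + p <= n)%N ->
  (shift_mx n a m)^T *m shift_mx n b p = \matrix_(i, j) (a + i == b + j)%N%:R.
Proof.
move=> bpn; apply/matrixP => i j.
have bj : (b + j < n)%N by move: (ltn_ord j); lia.
by rewrite (mul_shift_mxE _ _ (t := Ordinal bj)) // !mxE eq_sym.
Qed.

Lemma tr_shift_mx_mul_id n a m : (a + m <= n)%N ->
  (shift_mx n a m)^T *m shift_mx n a m = 1%:M.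
Proof.
by move=> amn; rewrite tr_shift_mx_mul //; apply/matrixP => i j; rewrite !mxE eqn_add2l.
Qed.

Lemma tr_shift_mx_mul_disjoint n a m b p :
  (b + p <= n)%N -> ((a + m <= b) || (b + p <= a))%N ->
  (shift_mx n a m)^T *m shift_mx n b p = 0.
Proof.
move=> bpn disj; rewrite tr_shift_mx_mul //; apply/matrixP => i j; rewrite !mxE.
by have /negbTE-> : (a + i != b + j)%N by move: (ltn_ord i) (ltn_ord j); lia.
Qed.

Lemma rV_shift_blocks_eq0 s l (v : 'rV[R]_(s * l)) :
  (forall i : 'I_s, v *m shift_mx (s * l) (i * l) l = 0) -> v = 0.
Proof.
move=> vblocks; apply/rowP => t; rewrite mxE.
have l0 : (0 < l)%N by have := ltn_ord t; nia.
have ts : (t %/ l < s)%N by rewrite ltn_divLR.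
have tl : (t %% l < l)%N by rewrite ltn_mod.
have /matrixP/(_ 0 (Ordinal tl)) := vblocks (Ordinal ts).
by rewrite (mul_shift_mxE _ _ (t := t)) /= -?divn_eq // mxE.
Qed.

Definition trunc_mx l n (A : 'M[R]_n) : 'M[R]_n :=
  \matrix_(j, k) if (l <= j)%N && (l <= k)%N then 0 else A j k.

Lemma trmx_trunc l n (A : 'M[R]_n) : (trunc_mx l A)^T = trunc_mx l A^T.
Proof. by apply/matrixP => j k; rewrite !mxE andbC. Qed.

Lemma trunc_mxN l n (A : 'M[R]_n) : trunc_mx l (- A) = - trunc_mx l A.
Proof. by apply/matrixP => j k; rewrite !mxE; case: ifP; rewrite ?oppr0. Qed.

End ShiftMatrices.
Arguments shift_mx {R} n a m.

Lemma mx11_eq0 (R : nzRingType) (X : 'M[R]_1) : X 0 0 = 0 -> X = 0.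
Proof. by move=> X0; apply/matrixP => i j; rewrite !ord1 X0 mxE. Qed.

Lemma trmx11 (R : nzRingType) (X : 'M[R]_1) : X^T = X.
Proof. by apply/matrixP => i j; rewrite !ord1 mxE. Qed.

Definition sym_or_skew (R : nzRingType) n (A : 'M[R]_n) := A^T = A \/ A^T = - A.

Lemma sym_alt_tuple_sym_or_skew (R : nzRingType) p q N (M : 'I_(p + q) -> 'M[R]_N) :
  sym_alt_tuple M -> forall i, sym_or_skew (M i).
Proof. by move=> symM i; rewrite /sym_or_skew; have := symM i; case: ifP; [left|right]. Qed.

Lemma sym_alt_tuple_congr_trunc (R : comNzRingType) p q N l
    (M : 'I_(p + q) -> 'M[R]_N) (G : 'M[R]_N) :
  sym_alt_tuple M -> sym_alt_tuple (fun i => trunc_mx l (G *m M i *m G^T)).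
Proof.
move=> symM i; rewrite trmx_trunc !trmx_mul trmxK mulmxA.
by have := symM i; case: ifP => _ ->; rewrite ?mulmxN ?mulNmx ?trunc_mxN.
Qed.

Section IsotropicSubspaces.
Variables (C : numClosedFieldType) (n : nat).
Implicit Types A : 'M[C]_n.

Lemma skew_isotropic A (x : 'rV_n) : A^T = - A -> x *m A *m x^T = 0.
Proof.
move=> skewA; apply: mx11_eq0; set X := x *m A *m x^T.
have /matrixP/(_ 0 0) : X^T = - X by rewrite !trmx_mul trmxK skewA mulNmx mulmxN mulmxA.
rewrite [LHS]mxE [RHS]mxE => XN; apply/eqP.
by have := mulrn_eq0 (X 0 0) 2; rewrite mulr2n {1}XN addNr eqxx.
Qed.

Lemma exists_independent_pair m (U : 'M[C]_(m, n)) : (1 < \rank U)%N ->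
  exists y z : 'rV_n, [/\ (y <= U)%MS, (z <= U)%MS &
    forall a b, a *: y + b *: z = 0 -> a = 0 /\ b = 0].
Proof.
move=> rkU; have rkU0 : (0 < \rank U)%N by lia.
pose i0 := Ordinal rkU0; pose i1 := Ordinal rkU.
have baseU : (row_base U <= U)%MS by rewrite eq_row_base.
exists (row i0 (row_base U)), (row i1 (row_base U)).
split; try exact: submx_trans (row_sub _ _) baseU.
move=> a b abU; pose v : 'rV_(\rank U) := a *: delta_mx 0 i0 + b *: delta_mx 0 i1.
have /matrixP v0 : v = 0.
  apply: (row_free_inj (row_base_free U)).
  by rewrite mul0mx mulmxDl -!scalemxAl -!rowE.
by move: (v0 0 i0) (v0 0 i1); rewrite !mxE /= !mulr1 !mulr0 addr0 add0r.
Qed.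

Lemma exists_isotropic_vector A m (U : 'M_(m, n)) :
  sym_or_skew A -> (1 < \rank U)%N ->
  exists x : 'rV_n, [/\ x != 0, (x <= U)%MS & x *m A *m x^T = 0].
Proof.
move=> symA /exists_independent_pair [y [z [yU zU indep]]].
have ny : y != 0.
  apply/eqP => y0; have := indep 1 0; rewrite y0 scaler0 scale0r addr0.
  by case=> // /eqP; rewrite oner_eq0.
case: symA => [symA|]; last by exists y; split=> //; apply: skew_isotropic.
pose q (u v : 'rV_n) := (u *m A *m v^T) 0 0.
have qC u v : q u v = q v u.
  by rewrite /q -[u *m A *m v^T]trmx11 !trmx_mul trmxK symA mulmxA.
have qyz t : q (y + t *: z) (y + t *: z) = q y y + t * q y z *+ 2 + t ^+ 2 * q z z.
  rewrite /q linearD linearZ /= !mulmxDl !mulmxDr -!scalemxAl -!scalemxAr.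
  have := qC z y; rewrite /q.
  set a := y *m A *m y^T; set b := y *m A *m z^T; set b' := z *m A *m y^T.
  set c := z *m A *m z^T; rewrite !mxE => ->; ring.
case: (eqVneq (q y y) 0) => [qy0|qy].
  by exists y; split=> //; apply: mx11_eq0.
case: (eqVneq (q z z) 0) => [qz0|qz].
  exists z; split=> //; last exact: mx11_eq0.
  apply/eqP => z0; have := indep 0 1; rewrite z0 scaler0 scale0r addr0.
  by case=> // _ /eqP; rewrite oner_eq0.
pose d := sqrtC (q y z ^+ 2 - q y y * q z z).
pose t := (d - q y z) / q z z.
exists (y + t *: z); split.
- apply/eqP => yz0; have := indep 1 t; rewrite scale1r.
  by case=> // /eqP; rewrite oner_eq0.
- by rewrite addmx_sub ?scalemx_sub.
- apply: mx11_eq0; rewrite -/(q _ _) qyz.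
  have d2 : d ^+ 2 = q y z ^+ 2 - q y y * q z z by rewrite sqrtCK.
  have -> : q y y + t * q y z *+ 2 + t ^+ 2 * q z z
          = (q y y * q z z + d ^+ 2 - q y z ^+ 2) / q z z by rewrite /t; field.
  by rewrite d2 addrCA subrr addr0 subrr mul0r.
Qed.

(* Split off an isotropic line [x], then recurse in the part of [U] orthogonal to [x]
   with respect to [A], taken complementary to [x]. *)
Lemma exists_isotropic_subspace A k m (U : 'M_(m, n)) :
  sym_or_skew A -> (k.*2 <= \rank U)%N ->
  exists W : 'M_(k, n), [/\ row_free W, (W <= U)%MS & W *m A *m W^T = 0].
Proof.
move=> symA; elim: k m U => [|k IHk] m U rkU.
  by exists 0; rewrite /row_free mxrank0 sub0mx !mul0mx.
have [x [nx xU isox]] : exists x : 'rV_n, [/\ x != 0, (x <= U)%MS & x *m A *m x^T = 0].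
  by apply: exists_isotropic_vector => //; lia.
pose U1 := (U :&: kermx (A *m x^T))%MS.
pose U2 := (U1 :\: x)%MS.
have rkU2 : (k.*2 <= \rank U2)%N.
  have := mxrank_sum_cap U (kermx (A *m x^T)); have := mxrank_ker (A *m x^T).
  have := rank_leq_col (U + kermx (A *m x^T))%MS; have := rank_leq_col (A *m x^T).
  have := mxrank_cap_compl U1 x; have := mxrankS (capmxSr U1 x).
  have := rank_leq_row x.
  rewrite -/U1 -/U2; lia.
have [W2 [freeW2 W2U2 isoW2]] := IHk _ U2 rkU2.
have W2U1 : (W2 <= U1)%MS by apply: submx_trans W2U2 (diffmxSl _ _).
have W2Ax : W2 *m A *m x^T = 0.
  by rewrite -mulmxA; apply/sub_kermxP; apply: submx_trans W2U1 (capmxSr _ _).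
exists (col_mx x W2); split.
- have xW2 : (x :&: W2)%MS = 0.
    by apply/eqP; rewrite -submx0 -(capmx_diff U1 x) capmxC capmxS.
  rewrite /row_free -(addsmxE x W2).1 mxrank_disjoint_sum //.
  by rewrite (eqP freeW2) (@rank_rV _ _ x) nx.
- by rewrite (@col_mx_sub _ 1 k) xU (submx_trans W2U1) // capmxSl.
- have xAW2 : x *m A *m W2^T = 0.
    apply: trmx_inj; rewrite trmx0 !trmx_mul trmxK mulmxA.
    by case: symA => ->; rewrite ?mulmxN ?mulNmx W2Ax ?oppr0.
  suff : col_mx x W2 *m A *m (col_mx x W2)^T = 0 :> 'M_(1 + k) by [].
  by rewrite tr_col_mx mul_col_mx mul_col_row isox isoW2 W2Ax xAW2 block_mx0.
Qed.

Lemma exists_common_isotropic_subspace (As : seq 'M[C]_n) k m (U : 'M_(m, n)) :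
  {in As, forall A, sym_or_skew A} -> (2 ^ size As * k <= \rank U)%N ->
  exists W : 'M_(k, n),
    [/\ row_free W, (W <= U)%MS & {in As, forall A, W *m A *m W^T = 0}].
Proof.
elim: As k m U => [|A As IHAs] k m U symAs rkU.
  rewrite expn0 mul1n in rkU; exists (pid_mx k *m row_base U); split=> //.
    by rewrite /row_free mxrankMfree ?row_base_free // rank_pid_mx.
  by apply: submx_trans (submxMl _ _) _; rewrite eq_row_base.
have [||W1 [freeW1 W1U isoW1]] := IHAs k.*2 m U.
- by move=> B AsB; apply: symAs; rewrite inE AsB orbT.
- by rewrite -mul2n mulnCA mulnA -expnS.
have [||W [freeW WW1 isoW]] := @exists_isotropic_subspace A k _ W1.
- by apply: symAs; rewrite inE eqxx.
- by rewrite (eqP freeW1).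
exists W; split=> [//||B]; first exact: submx_trans W1U.
rewrite inE => /predU1P [->//|AsB].
case/submxP: WW1 => D ->; rewrite trmx_mul !mulmxA -(mulmxA D) -(mulmxA D _ W1^T).
by rewrite isoW1 // mulmx0 mul0mx.
Qed.

End IsotropicSubspaces.

Section DirectSums.
Variable F : fieldType.

(* Full rank of the sum forces it to be direct and each [B i] to be injective on [V]. *)
Lemma sum_images_independent n s (V : 'M[F]_n) (B : 'I_s -> 'M[F]_n) :
  \rank (\sum_(i < s) V *m B i)%MS = (s * \rank V)%N ->
  forall v : 'I_s -> 'rV_n, (forall i, (v i <= V)%MS) ->
  \sum_i v i *m B i = 0 -> forall i, v i = 0.
Proof.
move=> rkS v vV sum0 i.
have rkVB_le j : (\rank (V *m B j) <= \rank V)%N := mxrankM_maxl V (B j).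
have dirS : mxdirect (\sum_j V *m B j).
  rewrite mxdirectEgeq /= rkS.
  by rewrite -[X in (_ <= X * _)%N]card_ord -sum_nat_const leq_sum.
have rkVB : \rank (V *m B i) = \rank V.
  have [_] := @leqif_sum _ xpredT (fun j => \rank (V *m B j) == \rank V) _ _
    (fun j _ => leqif_eq (rkVB_le j)).
  move: dirS; rewrite mxdirectE /= rkS sum_nat_const card_ord => /eqP <-.
  by rewrite eqxx => /esym/forallP/(_ i)/eqP.
have VB_ker : (V :&: kermx (B i))%MS = 0 by apply/eqP/mxrank_injP.
have viBi0 : v i *m B i = 0.
  apply/eqP; rewrite -submx0 -(mxdirect_sumsP dirS i isT) sub_capmx submxMr //=.
  have -> : v i *m B i = - \sum_(j < s | j != i) v j *m B j.
    by apply/eqP; rewrite -addr_eq0; move: sum0; rewrite (bigD1 i) //= => ->.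
  by rewrite eqmx_opp summx_sub_sums // => j _; apply: submxMr.
apply/eqP; rewrite -submx0 -VB_ker sub_capmx vV.
exact/sub_kermxP.
Qed.
End DirectSums.

Section CongruenceNormalForm.
Variable F : fieldType.

(* [G] stacks [W], a left inverse [L] of [Phi] and a basis of a complement of [W] in
   [kermx Phi], as consecutive row blocks. *)
Lemma unit_completion l n N (W : 'M[F]_(l, N)) (Phi : 'M[F]_(N, n)) :
  row_free W -> row_full Phi -> W *m Phi = 0 ->
  exists2 G : 'M_N, G \in unitmx &
    (shift_mx N 0 l)^T *m G = W /\ G *m Phi = shift_mx N l n.
Proof.
move=> freeW fullPhi WPhi; have [L LPhi] := row_fullP fullPhi.
pose K := kermx Phi; pose D := (K :\: W)%MS; pose B := row_base D.
have WK : (W <= K)%MS by apply/sub_kermxP.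
have rkD : (l + n + \rank D = N)%N.
  have := mxrank_cap_compl K W; rewrite (capmx_idPr WK) (eqP freeW) mxrank_ker.
  by rewrite -/D (eqP fullPhi); have := rank_leq_row Phi; rewrite (eqP fullPhi); lia.
pose P0 : 'M[F]_(N, l) := shift_mx N 0 l; pose P1 : 'M[F]_(N, n) := shift_mx N l n.
pose P2 : 'M[F]_(N, \rank D) := shift_mx N (l + n) (\rank D).
pose G := P0 *m W + P1 *m L + P2 *m B.
have P0G : P0^T *m G = W.
  rewrite /G !mulmxDr !mulmxA tr_shift_mx_mul_id ?(tr_shift_mx_mul_disjoint) //; try lia.
  by rewrite mul1mx !mul0mx !addr0.
have P1G : P1^T *m G = L.
  rewrite /G !mulmxDr !mulmxA tr_shift_mx_mul_id ?(tr_shift_mx_mul_disjoint) //; try lia.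
  by rewrite mul1mx !mul0mx add0r addr0.
have P2G : P2^T *m G = B.
  rewrite /G !mulmxDr !mulmxA tr_shift_mx_mul_id ?(tr_shift_mx_mul_disjoint) //; try lia.
  by rewrite mul1mx !mul0mx !add0r.
exists G; last split=> //.
- rewrite -row_full_unit -sub1mx -(subrK (Phi *m L) 1%:M) addmx_sub //.
    have IK : (1%:M - Phi *m L <= K)%MS.
      by apply/sub_kermxP; rewrite mulmxBl mul1mx -mulmxA LPhi mulmx1 subrr.
    apply: submx_trans IK _; rewrite -(addsmx_diff_cap_eq K W) addsmx_sub.
    rewrite -/D -(eq_row_base D) -/B -P2G submxMl /=.
    by rewrite (submx_trans (capmxSr _ _)) // -P0G submxMl.
  by rewrite (submx_trans (submxMl _ _)) // -P1G submxMl.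
- have BPhi : B *m Phi = 0 by apply/sub_kermxP; rewrite eq_row_base diffmxSl.
  rewrite /G !mulmxDl -(mulmxA P0) -(mulmxA P1) -(mulmxA P2) WPhi BPhi LPhi.
  by rewrite !mulmx0 mulmx1 add0r addr0.
Qed.

(* [Phi *m E i = M i *m W^T], so completing [W] along [Phi] turns the first [l]
   columns of [G *m M i *m G^T] into [E i] shifted down by [l]. *)
Lemma congruence_normal_form s l N (M : 'I_s -> 'M[F]_N) (W : 'M_(l, N)) :
  row_free W -> (forall i, W *m M i *m W^T = 0) ->
  (forall v : 'I_s -> 'rV_N, (forall i, (v i <= W)%MS) ->
     \sum_i v i *m (M i)^T = 0 -> forall i, v i = 0) ->
  exists2 G : 'M_N, G \in unitmx &
    forall i, G *m M i *m G^T *m shift_mx N 0 l = shift_mx N (l + i * l) l.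
Proof.
move=> freeW isoW indepW.
pose E (i : 'I_s) : 'M[F]_(s * l, l) := shift_mx (s * l) (i * l) l.
have E_fit (i : 'I_s) : (i * l + l <= s * l)%N by rewrite -mulSnr leq_mul2r ltn_ord orbT.
have EE i j : (E j)^T *m E i = if j == i then 1%:M else 0.
  case: eqVneq => [->|ji]; first exact: tr_shift_mx_mul_id.
  apply: tr_shift_mx_mul_disjoint => //; rewrite -!mulSnr !leq_mul2r.
  by move: ji; rewrite -val_eqE /=; lia.
pose Phi := \sum_i M i *m W^T *m (E i)^T.
have PhiE i : Phi *m E i = M i *m W^T.
  rewrite mulmx_suml (bigD1 i) //= big1 ?addr0 => [|j ji]; rewrite -mulmxA EE.
    by rewrite eqxx mulmx1.
  by rewrite (negbTE ji) mulmx0.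
have WPhi : W *m Phi = 0.
  by rewrite mulmx_sumr big1 // => i _; rewrite !mulmxA isoW !mul0mx.
have fullPhi : row_full Phi.
  rewrite /row_full -mxrank_tr; apply/inj_row_free => v vPhi.
  apply: rV_shift_blocks_eq0 => i; apply: (row_free_inj freeW); rewrite mul0mx.
  apply: (indepW (fun j => v *m E j *m W)) => [j|]; first exact: submxMl.
  rewrite -[RHS]vPhi linear_sum mulmx_sumr /=; apply: eq_bigr => j _.
  by rewrite !trmx_mul !trmxK !mulmxA.
have [G unitG [GW GPhi]] := unit_completion freeW fullPhi WPhi.
exists G => // i.
rewrite -mulmxA -[shift_mx N 0 l]trmxK -trmx_mul GW -mulmxA -PhiE mulmxA GPhi.
by rewrite shift_mx_mul.
Qed.
End CongruenceNormalForm.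

(* Congruence by [diag(c^-1, ..., c^-1, c, ..., c)] with [c ^+ 2 = t] fixes the entries
   with exactly one index below [l] and multiplies the lower right block by [t]. *)
Lemma congr_orbit_closure_trunc (C : numClosedFieldType) s N l
    (M : 'I_s -> 'M[C]_N) (G : 'M[C]_N) :
  G \in unitmx ->
  (forall i (j k : 'I_N), (j < l)%N -> (k < l)%N -> (G *m M i *m G^T) j k = 0) ->
  zariski_closure (congr_orbit M) (mxtuple_coords (fun i => trunc_mx l (G *m M i *m G^T))).
Proof.
move=> unitG X0.
pose z := mxtuple_coords (fun i => G *m M i *m G^T - trunc_mx l (G *m M i *m G^T)).
apply: (@zariski_closure_line _ _ _ _ z) => t t0.
pose c := sqrtC t.
have c2 : c ^+ 2 = t by rewrite sqrtCK.
have c0 : c != 0 by apply: contraNneq t0 => c0; rewrite -c2 c0 expr0n.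
pose d : 'rV[C]_N := \row_j if (j < l)%N then c^-1 else c.
exists (diag_mx d *m G); split.
  rewrite unitmx_mul unitG andbT unitmxE det_diag unitfE.
  by apply/prodf_neq0 => j _; rewrite mxE; case: ifP; rewrite ?invr_eq0.
apply: functional_extensionality => -[[i j] k]; rewrite /mxtuple_coords /=.
have -> : diag_mx d *m G *m M i *m (diag_mx d *m G)^T
          = diag_mx d *m (G *m M i *m G^T) *m diag_mx d.
  by rewrite trmx_mul tr_diag_mx !mulmxA.
move: (X0 i j k); rewrite /z /mxtuple_coords /=; move: (G *m M i *m G^T) => Y Y0.
rewrite mul_mx_diag mul_diag_mx !mxE.
case: (ltnP j l) => jl; case: (ltnP k l) => kl /=.
- by rewrite Y0 // subrr !mulr0 mul0r addr0.
- by rewrite subrr mulr0 addr0 mulrAC mulVf // mul1r.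
- by rewrite subrr mulr0 addr0 mulrAC mulfV // mul1r.
- by rewrite subr0 add0r -c2 expr2 mulrAC.
Qed.

Theorem corollary3p8 (C : numClosedFieldType) (p q l N : nat)
    (M : 'I_(p + q) -> 'M[C]_N) :
  sym_alt_tuple M ->
  (exists V : 'M[C]_N,
      \rank V = (2 ^ (p + q) * l)%N /\
      \rank (\sum_(i < p + q) V *m (M i)^T)%MS = ((p + q) * 2 ^ (p + q) * l)%N) ->
  exists M' : 'I_(p + q) -> 'M[C]_N,
    [/\ zariski_closure (congr_orbit M) (mxtuple_coords M'),
        sym_alt_tuple M',
        (forall (i : 'I_(p + q)) (j k : 'I_N),
            (l <= j)%N -> (l <= k)%N -> M' i j k = 0) &
        (forall (i : 'I_(p + q)) (j k : 'I_N), (k < l)%N ->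
            M' i j k =
              if ((i.+1 * l <= j)%N && (j < i.+2 * l)%N)
              then ((j - i.+1 * l)%N == k)%:R else 0)].
Proof.
move=> symM [V [rkV rkS]].
have [||W [freeW WV isoW]] :=
  @exists_common_isotropic_subspace C N [seq M i | i <- enum 'I_(p + q)] l N V.
- by move=> _ /mapP [i _ ->]; apply: sym_alt_tuple_sym_or_skew.
- by rewrite size_map size_enum_ord rkV.
have [||G unitG normG] := @congruence_normal_form C _ l N M W freeW.
- by move=> i; apply: isoW; rewrite map_f ?mem_enum.
- move=> v vW; apply: sum_images_independent => [|i]; last exact: submx_trans (vW i) WV.
  by rewrite rkS rkV mulnA.
have colG i (j k : 'I_N) (kl : (k < l)%N) :
    (G *m M i *m G^T) j k = ((j : nat) == l + i * l + k)%N%:R.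
  by rewrite -(@mul_shift_mxE _ _ _ 0 _ _ _ (Ordinal kl)) // normG mxE.
exists (fun i => trunc_mx l (G *m M i *m G^T)); split.
- apply: congr_orbit_closure_trunc => // i j k jl kl.
  by rewrite colG //; case: eqP => //; lia.
- exact: sym_alt_tuple_congr_trunc.
- by move=> i j k jl kl; rewrite mxE jl kl.
- move=> i j k kl; rewrite mxE (leqNgt l k) kl andbF colG // !mulSn.
  case: ifP => range; last by case: eqP => // jE; move: range; rewrite jE; lia.
  by congr (_%:R); apply/eqP/eqP; lia.
Qed.
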